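(* The Max-Egal objective is strategyproof against a manipulator $m^+$ (one who can only add edges) over directed networks. That is, for every $k$, every directed social network $G$, every agent $m$ and every manipulation in which $m$ adds outgoing edges $(m,a)\notin E$ (yielding $G^m$), we have \[\min_{P\in O(G^m)} u(m,P)\le\min_{P\in O(G)} u(m,P)\quad\text{and}\quad \max_{P\in O(G^m)} u(m,P)\le\max_{P\in O(G)} u(m,P),\] where $O(\cdot)$ denotes the set of Max-Egal solutions and $u(m,P)$ is computed in the true network $G$.
   Context: Let $A=\{a_1,\dots,a_n\}$ be a finite nonempty set of agents and $G=\langle A,E\rangle$ a directed graph without self-loops (the social network); $N(a)=\{b:(a,b)\in E\}$. For a coalition $C\subseteq A$ with $a\in C$, $u(a,C)=|C\cap N(a)|$. For $0<k\le n$, $\Pi_k$ is the set of partitions of $A$ into exactly $k$ nonempty coalitions; for $P\in\Pi_k$, $u(a,P)=u(a,C)$ where $C\in P$ contains $a$. The Max-Egal objective: $O(G)$ is the set of $P\in\Pi_k$ maximizing $\min_{a\in A}u(a,P)$ (utilities computed in the network in question). A manipulator $m$ of type $m^+$ in a directed network may add only outgoing edges $(m,a)\notin E$; incoming edges cannot be changed, so $N^m(a)=N(a)$ for all $a\ne m$, where $N^m$ is the neighbourhood in the reported network $G^m$. The utility $u(m,P)$ of the manipulator is always computed with respect to his true neighbours in the original $G$. *)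

From mathcomp Require Import all_boot.
Set Implicit Arguments. Unset Strict Implicit. Unset Printing Implicit Defensive.

Section Hedonic.
Variable T : finType.

Definition no_self_loops (E : rel T) : Prop := forall a, ~~ E a a.

Definition nbh (E : rel T) (a : T) : {set T} := [set b | E a b].

Definition util_coal (E : rel T) (a : T) (C : {set T}) : nat := #|C :&: nbh E a|.

Definition util (E : rel T) (a : T) (P : {set {set T}}) : nat :=
  util_coal E a (pblock P a).

(* Pi_k : partitions of A into exactly k nonempty coalitions
   (mathcomp's [partition] requires blocks nonempty, disjoint, covering). *)
Definition in_Pi (k : nat) (P : {set {set T}}) : bool :=
  partition P [set: T] && (#|P| == k).

(* egalitarian value min_a u(a,P) (A is nonempty whenever Pi_k is,
   and every utility is <= #|T|, so the neutral element is harmless) *)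
Definition egal (E : rel T) (P : {set {set T}}) : nat :=
  \big[minn/#|T|]_(a : T) util E a P.

Definition max_egal (E : rel T) (k : nat) (P : {set {set T}}) : bool :=
  in_Pi k P && [forall Q : {set {set T}}, in_Pi k Q ==> (egal E Q <= egal E P)].

Definition plus_manipulation (E : rel T) (m : T) (Em : rel T) : Prop :=
  no_self_loops Em /\
  (forall a b, a != m -> Em a b = E a b) /\
  (forall b, E m b -> Em m b).

Definition min_util_opt (Etrue Erep : rel T) (k : nat) (m : T) : nat :=
  \big[minn/#|T|]_(P | max_egal Erep k P) util Etrue m P.
Definition max_util_opt (Etrue Erep : rel T) (k : nat) (m : T) : nat :=
  \max_(P | max_egal Erep k P) util Etrue m P.

End Hedonic.

From mathcomp Require Import all_boot all_order.
Import Order.TTheory.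

(* Adding out-edges changes only the manipulator's own utility, so the
   egalitarian value in the true network is the reported one capped by the
   manipulator's true utility: egal E P = min (egal Em P) (util E m P).  For a
   reported optimum P and a true optimum Q, either util E m P <= util E m Q, or
   util E m P exceeds the true optimal value; then the cap is inactive at P,
   which forces P and Q to be optimal for both networks.  Comparing the two
   solution sets through this dichotomy bounds both the least and the largest
   utility the manipulator can obtain. *)

Section Maximizers.
Variable I : finType.

Definition maximizer (D : pred I) (F : I -> nat) (x : I) : bool :=
  D x && [forall y, D y ==> (F y <= F x)].

Lemma maximizerP (D : pred I) (F : I -> nat) x :
  reflect (D x /\ forall y, D y -> F y <= F x) (maximizer D F x).
Proof.
apply: (iffP andP) => [[Dx /forallP Fmax]|[Dx Fmax]].
  by split=> // y; apply/implyP.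
by split=> //; apply/forallP=> y; apply/implyP/Fmax.
Qed.

Lemma maximizer_exists {D : pred I} (F : I -> nat) {x0} :
  D x0 -> exists x, maximizer D F x.
Proof.
by move=> Dx0; case: (arg_maxnP F Dx0) => x Dx Fmax; exists x; apply/maximizerP.
Qed.

Variables (D : pred I) (F G h : I -> nat).
Hypothesis F_cap : forall x, F x = minn (G x) (h x).

Lemma maximizer_cap {x y} : maximizer D G x -> maximizer D F y ->
  h x <= h y \/ maximizer D F x /\ maximizer D G y.
Proof.
move=> /maximizerP[Dx Gmax] /maximizerP[Dy Fmax].
have F_le_G z : F z <= G z by rewrite F_cap geq_minl.
have F_le_h z : F z <= h z by rewrite F_cap geq_minr.
have [|hyx] := leqP (h x) (h y); first by left.
have Fx_lt_hx : F x < h x.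
  exact: leq_ltn_trans (Fmax x Dx) (leq_ltn_trans (F_le_h y) hyx).
have FxE : F x = G x.
  by move: Fx_lt_hx; rewrite F_cap gtn_min ltnn orbF => /ltnW /minn_idPl.
right; split; apply/maximizerP; split=> // z Dz.
  by rewrite FxE (leq_trans (F_le_G z)) ?Gmax.
by rewrite (leq_trans (Gmax z Dz)) // -FxE (leq_trans (Fmax x Dx)).
Qed.

Lemma bigmin_maximizer_cap c :
  \big[minn/c]_(x | maximizer D G x) h x
  <= \big[minn/c]_(y | maximizer D F y) h y.
Proof.
(* The bigmin lemmas of order.v only unify with minn once T := nat is given. *)
apply/(@bigmin_geP _ nat); split=> [|y Fy]; first exact: (@bigmin_le_id _ nat).
have /maximizerP[Dy _] := Fy.
have [x Gx] := maximizer_exists G Dy.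
case: (maximizer_cap Gx Fy) => [hxy|[_ Gy]].
  exact: (@bigmin_inf _ nat _ _ x) Gx hxy.
exact: (@bigmin_le_cond _ nat).
Qed.

Lemma bigmax_maximizer_cap :
  \max_(x | maximizer D G x) h x <= \max_(y | maximizer D F y) h y.
Proof.
apply/bigmax_leqP=> x Gx.
have /maximizerP[Dx _] := Gx.
have [y Fy] := maximizer_exists F Dx.
case: (maximizer_cap Gx Fy) => [hxy|[Fx _]].
  exact: leq_trans hxy (leq_bigmax_cond _ Fy).
exact: leq_bigmax_cond.
Qed.

End Maximizers.

Section PlusManipulation.
Context {T : finType} {E Em : rel T} {m : T}.
Hypothesis manip : plus_manipulation E m Em.

Lemma util_plus_manipulation_other a P : a != m -> util Em a P = util E a P.
Proof.
case: manip => _ [Eother _] am.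
have nbhE : nbh Em a = nbh E a by apply/setP=> b; rewrite !inE Eother.
by rewrite /util /util_coal nbhE.
Qed.

Lemma util_plus_manipulation_le P : util E m P <= util Em m P.
Proof.
case: manip => _ [_ Emore].
by apply/subset_leq_card/setIS/subsetP=> b; rewrite !inE; apply: Emore.
Qed.

Lemma egal_plus_manipulation P : egal E P = minn (egal Em P) (util E m P).
Proof.
rewrite /egal (@bigminD1 _ nat _ _ m xpredT (util E ^~ P)) //.
rewrite (@bigminD1 _ nat _ _ m xpredT (util Em ^~ P)) //.
rewrite [in RHS](eq_bigr (util E ^~ P)) => [|a /= am]; last first.
  by rewrite util_plus_manipulation_other.
by rewrite !minEnat minnAC (minn_idPr (util_plus_manipulation_le P)).
Qed.

End PlusManipulation.

Theorem theorem2 (T : finType) (E : rel T) (k : nat) (m : T) (Em : rel T) :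
  no_self_loops E ->
  0 < k <= #|T| ->
  plus_manipulation E m Em ->
  min_util_opt E Em k m <= min_util_opt E E k m /\
  max_util_opt E Em k m <= max_util_opt E E k m.
Proof.
move=> _ _ manip; have cap := egal_plus_manipulation manip.
split; [exact: bigmin_maximizer_cap cap _ | exact: bigmax_maximizer_cap cap].
Qed.
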